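(* Let $m\ge1$ and let $A=\{a_1,\dots,a_m\}$, $B=\{b_1,\dots,b_m\}$ be sets of integers with $1\le a_1<\dots<a_m$ and $1\le b_1<\dots<b_m$. Define $\ell(A,B)$ to be the largest integer $\ell\ge0$ for which there exist indices $1\le i_1<i_2<\dots<i_\ell\le m$ with $a_1<b_{i_1},\ a_2<b_{i_2},\ \dots,\ a_\ell<b_{i_\ell}$. Let $b'$ be an integer with $b'>a_m$ and $b'>b_m$, and let $B'=\{b_2,\dots,b_m,b'\}$. If $\ell(A,B)<m$, then $\ell(A,B')=\ell(A,B)+1$. *)

(* Sets A, B of size m are given by their increasing
   enumerations a, b : nat -> nat, 0-indexed: a_{k+1} in the paper is a k here
   (only values at k < m matter). *)
From mathcomp Require Import all_boot.
Set Implicit Arguments. Unset Strict Implicit. Unset Printing Implicit Defensive.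

Definition admissible (m : nat) (a b : nat -> nat) (l : nat) : bool :=
  [exists t : l.-tuple 'I_m,
     sorted ltn (map val t) && [forall k : 'I_l, a k < b (tnth t k)]].

(* ell(A,B): the largest admissible l (admissible l forces l <= m). *)
Definition ell (m : nat) (a b : nat -> nat) : nat :=
  \max_(l < m.+1 | admissible m a b l) l.

(* B' = {b_2,...,b_m,b'} as an increasing enumeration. *)
Definition shiftB (m : nat) (b : nat -> nat) (b' : nat) : nat -> nat :=
  fun k => if k.+1 < m then b k.+1 else b'.

From mathcomp Require Import all_boot.
From mathcomp Require Import zify.

Set Implicit Arguments.
Unset Strict Implicit.
Unset Printing Implicit Defensive.

(* When b is increasing, an admissible choice of l indices may as well be the
   last l indices m - l, ..., m - 1, so l is admissible iff a_k < b_(m-l+k)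
   for all k < l.  Dropping b_1 and appending b' shifts these indices by one,
   and the new last condition a_l < b' always holds; hence l + 1 is
   admissible for B' exactly when l is admissible for B. *)

Definition increasing_upto (n : nat) (f : nat -> nat) :=
  forall k, k.+1 < n -> f k < f k.+1.

Lemma increasing_upto_gap n f i j : increasing_upto n f ->
  i <= j -> j < n -> f i + (j - i) <= f j.
Proof.
move=> f_incr; elim: j => [|j IHj]; first by rewrite leqn0 => /eqP -> _; rewrite addn0.
rewrite leq_eqVlt => /predU1P [-> _ | le_ij lt_jn]; first by rewrite subnn addn0.
have := IHj le_ij (ltnW lt_jn); have := f_incr j lt_jn; lia.
Qed.

Lemma increasing_upto_leq n f i j : increasing_upto n f ->
  i <= j -> j < n -> f i <= f j.
Proof. by move=> f_incr le_ij lt_jn; have := increasing_upto_gap f_incr le_ij lt_jn; lia. Qed.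

Lemma sorted_ltn_nth_bound m (s : seq nat) k : sorted ltn s -> all (ltn^~ m) s ->
  k < size s -> nth 0 s k + (size s - k) <= m.
Proof.
move=> /(sortedP 0) s_incr /(all_nthP 0) s_lt lt_ks.
have lt_last : (size s).-1 < size s by lia.
have le_k_last : k <= (size s).-1 by lia.
have /= := s_lt _ lt_last; have := increasing_upto_gap s_incr le_k_last lt_last; lia.
Qed.

Lemma admissibleE m a b l : increasing_upto m b ->
  admissible m a b l = (l <= m) && [forall k : 'I_l, a k < b (m - l + k)].
Proof.
move=> b_incr; apply/existsP/andP => [[t /andP [t_sorted /forallP a_lt_b]] | [le_lm /forallP a_lt_b]].
  have t_lt_m : all (ltn^~ m) (map val t).
    by apply/allP => _ /mapP [i _ ->]; apply: ltn_ord.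
  have t_bound (k : 'I_l) : tnth t k + (l - k) <= m.
    have lt_k : k < size (map val t) by rewrite size_map size_tuple.
    have := sorted_ltn_nth_bound t_sorted t_lt_m lt_k.
    by rewrite (nth_map (tnth t k)) ?size_tuple // -tnth_nth.
  have le_lm : l <= m.
    by case: l t a_lt_b t_bound {t_sorted t_lt_m} => // l t _ /(_ ord0) /=; lia.
  split=> //; apply/forallP => k; have := ltn_ord k.
  (* Generalizing merges two copies of [tnth t k] whose (convertible) types
     differ syntactically, which lia would treat as distinct atoms. *)
  move: (tnth t k) (a_lt_b k) (t_bound k) => i a_lt_bi i_bound lt_kl.
  by apply: leq_trans a_lt_bi (increasing_upto_leq b_incr _ _); lia.
pose last_indices := [tuple cast_ord (subnK le_lm) (rshift (m - l) k) | k < l].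
exists last_indices; apply/andP; split.
  have -> : map val last_indices = iota (m - l) l.
    by rewrite -[m - l]addn0 iotaDl -val_enum_ord -!map_comp.
  exact: iota_ltn_sorted.
by apply/forallP => k; rewrite tnth_mktuple; apply: a_lt_b.
Qed.

Section Ell.

Variables (m : nat) (a b : nat -> nat).

Lemma admissible0 : admissible m a b 0.
Proof. by apply/existsP; exists [tuple]; apply/andP; split=> //; apply/forallP => -[]. Qed.

Lemma ell_leP n :
  reflect (forall l, l <= m -> admissible m a b l -> l <= n) (ell m a b <= n).
Proof.
apply: (iffP idP) => [/bigmax_leqP le_n l | le_n]; last first.
  by apply/bigmax_leqP => l; apply: le_n; rewrite -ltnS.
by rewrite -ltnS => lt_lm; apply: (le_n (Ordinal lt_lm)).
Qed.

Lemma ell_admissible : admissible m a b (ell m a b).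
Proof.
have : 0 < #|[pred l : 'I_m.+1 | admissible m a b l]|.
  by apply/card_gt0P; exists ord0; rewrite inE admissible0.
by case/(eq_bigmax_cond val) => l; rewrite inE /ell => adm_l ->.
Qed.

Lemma ell_max l : l <= m -> admissible m a b l -> l <= ell m a b.
Proof. by rewrite -ltnS => lt_lm; apply: (leq_bigmax_cond (Ordinal lt_lm)). Qed.

End Ell.

Lemma shiftB_increasing m b b' :
  increasing_upto m b -> b m.-1 < b' -> increasing_upto m (shiftB m b b').
Proof.
move=> b_incr b_lt_b' k lt_km; rewrite /shiftB lt_km.
case: ifP => [|/negbT]; first exact: b_incr.
by rewrite -leqNgt => le_mk; have -> : k.+1 = m.-1 by lia.
Qed.

Lemma admissible_shiftB m a b b' l :
  increasing_upto m a -> increasing_upto m b -> a m.-1 < b' -> b m.-1 < b' ->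
  l < m -> admissible m a (shiftB m b b') l.+1 = admissible m a b l.
Proof.
move=> a_incr b_incr a_lt_b' b_lt_b' lt_lm.
rewrite (admissibleE _ _ (shiftB_increasing b_incr b_lt_b')) admissibleE //.
rewrite lt_lm ltnW //= /shiftB; apply/forallP/forallP => a_lt_b k.
  have := a_lt_b (widen_ord (leqnSn l) k); have := ltn_ord k => lt_kl /=.
  have -> : (m - l.+1 + k).+1 = m - l + k by lia.
  by rewrite ifT //; lia.
have [lt_kl | le_lk] := ltnP k l.
  have := a_lt_b (Ordinal lt_kl) => /=.
  have -> : (m - l.+1 + k).+1 = m - l + k by lia.
  by rewrite ifT //; lia.
have := ltn_ord k => lt_kSl; rewrite ifF; last by lia.
by apply: leq_ltn_trans a_lt_b'; apply: increasing_upto_leq a_incr _ _; lia.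
Qed.

Theorem lemma5p11 (m : nat) (a b : nat -> nat) (b' : nat) :
  0 < m ->
  1 <= a 0 -> (forall k, k.+1 < m -> a k < a k.+1) ->
  1 <= b 0 -> (forall k, k.+1 < m -> b k < b k.+1) ->
  a m.-1 < b' -> b m.-1 < b' ->
  ell m a b < m ->
  ell m a (shiftB m b b') = (ell m a b).+1.
Proof.
move=> _ _ a_incr _ b_incr a_lt_b' b_lt_b' ell_lt_m.
have adm_shift := admissible_shiftB a_incr b_incr a_lt_b' b_lt_b'.
apply/eqP; rewrite eqn_leq; apply/andP; split.
  apply/ell_leP => -[|l] // lt_lm; rewrite adm_shift // => adm_l.
  exact: ell_max (ltnW lt_lm) adm_l.
by apply: ell_max => //; rewrite adm_shift // ell_admissible.
Qed.
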